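(* Let $F$ be an algebraically closed field of characteristic zero, $A(x)$ a nonsingular $n\times n$ matrix over $F[x]$, and $P(x),Q(x)$ invertible matrices over $F[x]$ with $P(x)A(x)Q(x)=\Phi(x)=\mathrm{diag}(\varphi_1(x),\dots,\varphi_n(x))$, the Smith form of $A(x)$ with monic diagonal entries. Let $s\ge1$ be an integer. Then there exists an invertible $U(x)$ over $F[x]$ with $A(x)U(x)=Ix^s-D_{s-1}x^{s-1}-\dots-D_0$ for some $D_i\in M_n(F)$ if and only if (1) $\deg\det A(x)=ns$ and (2) $\det M_{P(x)\,\|I\ \ Ix\ \ \cdots\ \ Ix^{s-1}\|}(\Phi)\neq0$, where $\|I\ Ix\ \cdots\ Ix^{s-1}\|$ is the $n\times ns$ block row matrix.
   Context: For a $1\times m$ row $g(x)$ over $F[x]$ and a monic $\varphi(x)=\prod_{j=1}^r(x-\alpha_j)^{k_j}$ with distinct $\alpha_j\in F$, $M_{g}(\varphi)$ is the $(\deg\varphi)\times m$ matrix over $F$ obtained by stacking, for $j=1,\dots,r$, the rows $g(\alpha_j),g'(\alpha_j),\dots,g^{(k_j-1)}(\alpha_j)$ (entrywise derivatives); it is empty if $\deg\varphi=0$. For an $n\times m$ matrix $G(x)$ with rows $g_1(x),\dots,g_n(x)$ and $\Phi=\mathrm{diag}(\varphi_1,\dots,\varphi_n)$ with monic $\varphi_i$, $M_{G}(\Phi)$ is the matrix obtained by stacking $M_{g_1}(\varphi_1),\dots,M_{g_n}(\varphi_n)$; it has $\deg\det\Phi$ rows (the ordering of roots affects it only by a row permutation).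 The Smith form of $A(x)$ is a diagonal matrix $\mathrm{diag}(\varphi_1,\dots,\varphi_n)$, $\varphi_i\mid\varphi_{i+1}$, equivalent to $A(x)$. *)

From HB Require Import structures.
From mathcomp Require Import all_boot all_order all_algebra.
Set Implicit Arguments. Unset Strict Implicit. Unset Printing Implicit Defensive.
Import GRing.Theory.
Local Open Scope ring_scope.

Section MDefs.
Variable F : closedFieldType.

(* A list of the roots of p, each repeated according to its multiplicity
   (for p monic, p = \prod_(z <- roots_with_mult p) ('X - z%:P)). *)
Definition roots_with_mult (p : {poly F}) : seq F :=
  sval (closed_field_poly_normal p).

(* The rows of M_g(phi): for each distinct root a of phi of multiplicity k,
   the rows g(a), g'(a), ..., g^(k-1)(a) (entrywise derivatives). *)
Definition Mrows (m : nat) (g : 'rV[{poly F}]_m) (phi : {poly F}) : seq 'rV[F]_m :=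
  let rs := roots_with_mult phi in
  flatten [seq [seq \row_j ((g 0 j)^`(k)).[a] | k <- iota 0 (count_mem a rs)]
          | a <- undup rs].

Definition MGrows (n m : nat) (G : 'M[{poly F}]_(n, m)) (phi : 'I_n -> {poly F})
  : seq 'rV[F]_m :=
  flatten [seq Mrows (row i G) (phi i) | i <- enum 'I_n].

Definition mx_of_rows (N : nat) (r : seq 'rV[F]_N) : 'M[F]_N :=
  \matrix_(i < N, j < N) (nth 0 r i) 0 j.

(* The n x ns block row matrix || I  Ix  ...  Ix^(s-1) ||. *)
Definition block_powers (n s : nat) : 'M[{poly F}]_(n, n * s) :=
  \matrix_(i < n, j < n * s) (if (i == (j %% n)%N :> nat) then 'X^(j %/ n)%N else 0).

End MDefs.

From HB Require Import structures.
From mathcomp Require Import all_boot all_order all_algebra perm zify.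
Import GRing.Theory.
Local Open Scope ring_scope.

Set Implicit Arguments. Unset Strict Implicit. Unset Printing Implicit Defensive.

(* Let B = ||I Ix ... Ix^(s-1)|| and M = M_{PB}(Phi).  For C over F, the rows of
   M C are the Hermite data of P B C at the roots of the phi_i (derivatives up to
   the multiplicities).  In characteristic zero they coincide with those of P V iff
   each phi_i divides row i of P (B C - V), i.e. iff B C - V = A W for some W,
   because P A Q = Phi.  If A U is monic of degree s and M c = 0, then
   B c = (A U) (U^-1 W) is a column of degree < s in the image of a monic matrix
   polynomial of degree s, hence zero, and so c = 0.  Conversely, if M is
   invertible, solving M C = M_{P x^s I}(Phi) gives B C - x^s I = A W, so A (-W) is
   monic of degree s and comparing the degrees of determinants shows that W is
   invertible. *)

Section HermiteDivisibility.
Variable F : fieldType.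

Lemma derivnS_XsubC_mul (a : F) (q : {poly F}) l :
  (('X - a%:P) * q)^`(l.+1) = q^`(l) *+ l.+1 + ('X - a%:P) * q^`(l.+1).
Proof.
elim: l => [|l IH].
  by rewrite derivn1 derivM derivXsubC mul1r derivn0 derivn1.
rewrite derivnS IH derivD derivMn derivM derivXsubC mul1r -!derivnS.
by rewrite addrA [_ *+ l.+2]mulrSr.
Qed.

Lemma prod_XsubC_exp_dvdp (u : seq F) (c : F -> nat) (p : {poly F}) :
  uniq u -> (forall a, a \in u -> ('X - a%:P) ^+ c a %| p) ->
  \prod_(a <- u) ('X - a%:P) ^+ c a %| p.
Proof.
elim: u => [|a u IH] /=; first by rewrite big_nil dvd1p.
move=> /andP[au uu] dvd_p; rewrite big_cons Gauss_dvdp.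
  by rewrite dvd_p ?mem_head // IH // => b bu; rewrite dvd_p // inE bu orbT.
apply: coprimep_expl; rewrite coprimep_sym coprimep_XsubC /root horner_prod.
rewrite prodf_seq_neq0; apply/allP => b bu /=.
by rewrite horner_exp hornerXsubC expf_neq0 // subr_eq0; apply: contraNneq au => ->.
Qed.

Hypothesis char0 : [pchar F] =i pred0.

Lemma XsubC_exp_dvdp (a : F) k (p : {poly F}) :
  (forall l, (l < k)%N -> (p^`(l)).[a] = 0) -> ('X - a%:P) ^+ k %| p.
Proof.
elim: k p => [|k IH] p p_a; first by rewrite expr0 dvd1p.
have [q Dp] : exists q, p = q * ('X - a%:P).
  by apply/factor_theorem; rewrite /root -(derivn0 p) p_a.
rewrite Dp exprSr dvdp_mul ?dvdpp //; apply: IH => l lk.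
have := p_a l.+1 lk; rewrite Dp mulrC derivnS_XsubC_mul hornerD hornerM.
rewrite hornerXsubC subrr mul0r addr0 hornerMn -mulr_natr.
move/eqP; rewrite mulf_eq0 => /orP[/eqP //|].
by move/(pcharf0P _).1: char0 => ->.
Qed.

End HermiteDivisibility.

Section RootsWithMult.
Variable F : closedFieldType.

Lemma roots_with_multE (p : {poly F}) : p \is monic ->
  p = \prod_(z <- roots_with_mult p) ('X - z%:P).
Proof.
move=> mp; rewrite /roots_with_mult; case: closed_field_poly_normal => r /= Dp.
by rewrite {1}Dp (monicP mp) scale1r.
Qed.

Hypothesis char0 : [pchar F] =i pred0.

Lemma dvdp_roots_with_mult (phi p : {poly F}) :
  phi \is monic ->
  (forall a k, a \in roots_with_mult phi ->
     (k < count_mem a (roots_with_mult phi))%N -> (p^`(k)).[a] = 0) ->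
  phi %| p.
Proof.
move=> mphi p_a; rewrite (roots_with_multE mphi) -prodr_undup_exp_count.
apply: prod_XsubC_exp_dvdp (undup_uniq _) _ => a; rewrite mem_undup => a_phi.
by apply: (XsubC_exp_dvdp char0) => l lk; apply: p_a.
Qed.

End RootsWithMult.

Section StackRows.
Variables (R : nmodType) (N m : nat).

Definition stack_rows (r : seq 'rV[R]_m) : 'M[R]_(N, m) :=
  \matrix_(i, j) (nth 0 r i) 0 j.

Lemma row_stack_rows (r : seq 'rV[R]_m) (i : 'I_N) :
  row i (stack_rows r) = nth 0 r i.
Proof. by apply/rowP => j; rewrite !mxE. Qed.

End StackRows.

Lemma mx_of_rowsE (F : closedFieldType) N (r : seq 'rV[F]_N) :
  mx_of_rows r = stack_rows N r.
Proof. by []. Qed.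

Section HermiteRows.
Variables (F : closedFieldType) (n : nat) (phi : 'I_n -> {poly F}).
Local Notation rs i := (roots_with_mult (phi i)).

Definition MG_index : seq ('I_n * F * nat) :=
  flatten [seq flatten [seq [seq (i, a, k) | k <- iota 0 (count_mem a (rs i))]
                       | a <- undup (rs i)]
          | i <- enum 'I_n].

Definition MG_row m (G : 'M[{poly F}]_(n, m)) (t : 'I_n * F * nat) : 'rV[F]_m :=
  \row_j ((G t.1.1 j)^`(t.2)).[t.1.2].

Lemma MGrowsE m (G : 'M_(n, m)) : MGrows G phi = map (MG_row G) MG_index.
Proof.
rewrite /MGrows /MG_index map_flatten; congr flatten.
rewrite -[RHS]map_comp; apply: eq_map => i /=.
rewrite /Mrows map_flatten; congr flatten.
rewrite -[RHS]map_comp; apply: eq_map => a /=.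
by rewrite -[RHS]map_comp; apply: eq_map => k; apply/rowP => j; rewrite !mxE.
Qed.

Lemma MG_row0 m t : MG_row (0 : 'M_(n, m)) t = 0.
Proof. by apply/rowP => j; rewrite !mxE linear0 horner0. Qed.

Lemma MG_rowB m (G H : 'M_(n, m)) t : MG_row (G - H) t = MG_row G t - MG_row H t.
Proof. by apply/rowP => j; rewrite !mxE derivnB hornerD hornerN. Qed.

Lemma MG_row_mul m p (G : 'M_(n, m)) (C : 'M[F]_(m, p)) t :
  MG_row (G *m map_mx polyC C) t = MG_row G t *m C.
Proof.
apply/rowP => j; rewrite !mxE; under eq_bigr do rewrite mxE mulrC mul_polyC.
rewrite linear_sum horner_sum; apply: eq_bigr => l _.
by rewrite linearZ hornerZ mxE mulrC.
Qed.

Lemma mem_MG_index i a k : a \in rs i -> (k < count_mem a (rs i))%N ->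
  (i, a, k) \in MG_index.
Proof.
move=> a_i k_a; apply/flattenP; eexists.
  by apply/mapP; exists i; rewrite ?mem_enum.
apply/flattenP; eexists; first by apply/mapP; exists a; rewrite ?mem_undup.
by apply/mapP; exists k; rewrite ?mem_iota.
Qed.

Lemma size_MG_index :
  size MG_index = size (flatten [seq rs i | i <- enum 'I_n]).
Proof.
rewrite !size_flatten /shape -!map_comp; congr sumn; apply: eq_map => i /=.
rewrite -(perm_size (perm_count_undup (rs i))) !size_flatten /shape -!map_comp.
by congr sumn; apply: eq_map => a /=; rewrite size_map size_iota size_nseq.
Qed.

Hypothesis monic_phi : forall i, phi i \is monic.

Lemma prod_phiE :
  \prod_i phi i = \prod_(z <- flatten [seq rs i | i <- enum 'I_n]) ('X - z%:P).
Proof.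
rewrite big_flatten big_map big_enum /=.
by apply: eq_bigr => i _; rewrite -roots_with_multE.
Qed.

Lemma size_MG_index_prod : size MG_index = (size (\prod_i phi i)).-1.
Proof. by rewrite prod_phiE size_prod_XsubC size_MG_index. Qed.

Hypothesis char0 : [pchar F] =i pred0.

Lemma dvdp_MG_row_eq0 m (H : 'M_(n, m)) :
  (forall t, t \in MG_index -> MG_row H t = 0) -> forall i j, phi i %| H i j.
Proof.
move=> H0 i j; apply: dvdp_roots_with_mult => // a k a_i k_a.
by have /rowP/(_ j) := H0 _ (mem_MG_index a_i k_a); rewrite !mxE.
Qed.

Lemma nth_MGrows m (G : 'M_(n, m)) t : t \in MG_index ->
  nth 0 (MGrows G phi) (index t MG_index) = MG_row G t.
Proof. by move=> tI; rewrite MGrowsE (nth_map t) ?index_mem // nth_index. Qed.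

Lemma MG_row_eq_of_stack N m (G : 'M_(n, N)) (C : 'M[F]_(N, m)) (H : 'M_(n, m)) :
  size MG_index = N ->
  stack_rows N (MGrows G phi) *m C = stack_rows N (MGrows H phi) ->
  forall t, t \in MG_index -> MG_row (G *m map_mx polyC C) t = MG_row H t.
Proof.
move=> sizeN GCH t tI; have tN : (index t MG_index < N)%N by rewrite -sizeN index_mem.
have := congr1 (row (Ordinal tN)) GCH.
by rewrite row_mul !row_stack_rows /= !nth_MGrows // MG_row_mul.
Qed.

Lemma stack_rows_MGrows0 N m : stack_rows N (MGrows (0 : 'M_(n, m)) phi) = 0.
Proof.
apply/matrixP => i j; rewrite !mxE MGrowsE.
have [iI|iI] := ltnP i (size (map (@MG_row m 0) MG_index)); last first.
  by rewrite nth_default // mxE.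
by have /mapP[t _ ->] := mem_nth 0 iI; rewrite MG_row0 mxE.
Qed.

End HermiteRows.

Lemma smith_range (F : fieldType) n m (A P Q : 'M[{poly F}]_n)
    (phi : 'I_n -> {poly F}) (X : 'M_(n, m)) :
  P \in unitmx -> P *m A *m Q = diag_mx (\row_i phi i) ->
  (forall i j, phi i %| (P *m X) i j) -> exists W, X = A *m W.
Proof.
move=> unitP PAQ phi_PX; set Y := \matrix_(i, j) ((P *m X) i j %/ phi i).
have PX : P *m X = diag_mx (\row_i phi i) *m Y.
  apply/matrixP => i j; have := phi_PX i j.
  by rewrite mul_diag_mx !mxE [RHS]mulrC => /divpK.
by exists (Q *m Y); rewrite -[X](mulKmx unitP) PX -PAQ -!mulmxA mulKmx.
Qed.

Lemma unitmx_poly (F : fieldType) n (U : 'M[{poly F}]_n) :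
  (U \in unitmx) = (size (\det U) == 1%N).
Proof.
rewrite unitmxE poly_unitE; apply: andb_idr => /size_poly1P[c c0 ->].
by rewrite coefC unitfE.
Qed.

Lemma size_mul_size1 (F : fieldType) (p u : {poly F}) :
  size u = 1%N -> size (p * u) = size p.
Proof.
by move/eqP/size_poly1P => [c c0 ->]; rewrite mulrC size_Cmul.
Qed.

Lemma size_det_mulmx_unitmx (F : fieldType) n (A U : 'M[{poly F}]_n) :
  U \in unitmx -> size (\det (A *m U)) = size (\det A).
Proof. by rewrite unitmx_poly det_mulmx => /eqP/size_mul_size1. Qed.

Lemma unitmx_of_size_det_mulmx (F : fieldType) n (A W : 'M[{poly F}]_n) :
  \det A != 0 -> size (\det (A *m W)) = size (\det A) -> W \in unitmx.
Proof.
move=> detA0; rewrite det_mulmx unitmx_poly.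
have [->|detW0] := eqVneq (\det W) 0.
  by rewrite mulr0 size_poly0 => /esym/eqP; rewrite size_poly_eq0 (negPf detA0).
have detA_gt0 : (0 < size (\det A))%N by rewrite size_poly_gt0.
rewrite size_mul // -(prednK detA_gt0) addSn /= -[X in _ = X]addn1.
by move=> /addnI ->.
Qed.

Lemma det_neq0_of_ker0 (F : fieldType) N (M : 'M[F]_N) :
  (forall c : 'cV_N, M *m c = 0 -> c = 0) -> \det M != 0.
Proof.
move=> ker0; rewrite -det_tr; apply/det0P => -[v /eqP v0 vM]; apply: v0.
by rewrite -[v]trmxK (ker0 v^T) ?trmx0 // -[M]trmxK -trmx_mul vM trmx0.
Qed.

Section BlockPowers.
Variables (F : closedFieldType) (n s m : nat) (C : 'M[F]_(n * s, m)).
Local Notation BC := (block_powers F n s *m map_mx polyC C).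

Lemma block_powers_mulmxE i j :
  BC i j = \sum_(r < n * s | i == (r %% n)%N :> nat) C r j *: 'X^(r %/ n).
Proof.
rewrite mxE [RHS]big_mkcond; apply: eq_bigr => r _; rewrite !mxE.
by case: ifP => _; rewrite ?mul0r // mulrC mul_polyC.
Qed.

Lemma size_block_powers_mulmx i j : (size (BC i j) <= s)%N.
Proof.
rewrite block_powers_mulmxE; apply: leq_trans (size_sum _ _ _) _.
apply/bigmax_leqP => r _; apply: leq_trans (size_scale_leq _ _) _.
have n_gt0 : (0 < n)%N by case: (n) r => [[]|].
by rewrite size_polyXn ltn_divLR //; have := ltn_ord r; lia.
Qed.

Lemma coef_block_powers_mulmx (r : 'I_(n * s)) (i : 'I_n) j :
  i = (r %% n)%N :> nat -> (BC i j)`_(r %/ n) = C r j.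
Proof.
move=> i_r; rewrite block_powers_mulmxE coef_sum (bigD1 r) /= ?i_r //.
rewrite coefZ coefXn eqxx mulr1 big1 ?addr0 // => l /andP[/eqP r_l l_r].
rewrite coefZ coefXn; case: eqP => [lr|]; last by rewrite mulr0.
by case/eqP: l_r; apply: val_inj; rewrite /= (divn_eq l n) (divn_eq r n) lr r_l.
Qed.

Lemma block_powers_mulmx_eq0 : BC = 0 -> C = 0.
Proof.
move=> BC0; apply/matrixP => r j; rewrite mxE.
have n_gt0 : (0 < n)%N by case: (n) r => [[]|].
have := coef_block_powers_mulmx (i := Ordinal (ltn_pmod r n_gt0)) j erefl.
by rewrite BC0 mxE coef0.
Qed.

End BlockPowers.

Section MonicMatrixPolynomial.
Variables (F : fieldType) (n s : nat).

Lemma size_det_monic_diag (M : 'M[{poly F}]_n) :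
  (forall i, M i i \is monic) -> (forall i, size (M i i) = s.+1) ->
  (forall i j, i != j -> (size (M i j) <= s)%N) ->
  size (\det M) = (n * s).+1.
Proof.
move=> monic_diag size_diag size_off.
have size_le i j : (size (M i j) <= s.+1)%N.
  by have [<-|/size_off/leqW//] := eqVneq i j; rewrite size_diag.
rewrite /determinant (bigD1 (1%g : 'S_n)) //= odd_perm1 expr0 mul1r.
under eq_bigr do rewrite perm1.
have size_id : size (\prod_i M i i) = (n * s).+1.
  rewrite size_prod => [|i _]; last exact: monic_neq0.
  by rewrite (eq_bigr (fun _ => s.+1)) // sum_nat_const card_ord mulnS; lia.
rewrite size_polyDl size_id // ltnS; apply: leq_trans (size_sum _ _ _) _.
apply/bigmax_leqP => p p1; rewrite mulr_sign.
suff: (size (\prod_i M i (p i))%R <= n * s)%N by case: ifP; rewrite ?size_polyN.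
have [i0 moved_i0] : exists i0, p i0 != i0.
  apply/existsP; apply: contraR p1 => /existsPn fixed; apply/eqP/permP => i.
  by rewrite perm1; apply/eqP; rewrite -[_ == _]negbK fixed.
apply: leq_trans (size_poly_prod_leq _ _) _.
have : (\sum_i size (M i (p i)) < \sum_(i < n) s.+1)%N.
  rewrite (bigD1 i0) //= [X in (_ < X)%N](bigD1 i0) //= -addSn.
  apply: leq_add; first by rewrite ltnS size_off // eq_sym.
  by apply: leq_sum => i _; apply: size_le.
by rewrite sum_nat_const card_ord mulnS; lia.
Qed.

Lemma size_sum_scaleXn (c : 'I_s -> F) : (size (\sum_(k < s) c k *: 'X^k)%R <= s)%N.
Proof.
apply: leq_trans (size_sum _ _ _) _; apply/bigmax_leqP => k _.
by apply: leq_trans (size_scale_leq _ _) _; rewrite size_polyXn.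
Qed.

Variable D : 'I_s -> 'M[F]_n.

Definition monic_mxpoly : 'M[{poly F}]_n :=
  'X^s *: 1%:M - \sum_(k < s) 'X^k *: map_mx polyC (D k).

Lemma monic_mxpoly_tailE i j :
  (\sum_(k < s) 'X^k *: map_mx polyC (D k)) i j = \sum_(k < s) D k i j *: 'X^k.
Proof.
rewrite summxE; apply: eq_bigr => k _.
by rewrite !mxE mulrC mul_polyC.
Qed.

Lemma monic_mxpolyE i j :
  monic_mxpoly i j = 'X^s *+ (i == j) - \sum_(k < s) D k i j *: 'X^k.
Proof. by rewrite !mxE monic_mxpoly_tailE mulr_natr. Qed.

Lemma size_det_monic_mxpoly : size (\det monic_mxpoly) = (n * s).+1.
Proof.
have size_tail i j : (size (- \sum_(k < s) D k i j *: 'X^k) < size ('X^s : {poly F}))%N.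
  by rewrite size_polyN size_polyXn ltnS size_sum_scaleXn.
apply: size_det_monic_diag => [i|i|i j /negbTE ij]; rewrite monic_mxpolyE ?eqxx ?ij.
- by rewrite mulr1n monicE lead_coefDl // lead_coefXn.
- by rewrite mulr1n size_polyDl // size_polyXn.
- by rewrite mulr0n sub0r size_polyN size_sum_scaleXn.
Qed.

Lemma monic_mxpoly_mulE m (W : 'M_(n, m)) i j :
  (monic_mxpoly *m W) i j =
    'X^s * W i j - \sum_l (\sum_(k < s) D k i l *: 'X^k) * W l j.
Proof.
rewrite mxE; under eq_bigr do rewrite monic_mxpolyE mulrBl.
rewrite sumrB (bigD1 i) //= eqxx mulr1n big1 ?addr0 // => l /negbTE.
by rewrite eq_sym => ->; rewrite mulr0n mul0r.
Qed.

Lemma monic_mxpoly_mul_eq0 m (W : 'M_(n, m)) :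
  (forall i j, (size ((monic_mxpoly *m W) i j) <= s)%N) -> W = 0.
Proof.
move=> small; apply/matrixP => i j; rewrite mxE; apply/eqP; rewrite -size_poly_eq0.
have [i1 _ i1_max] := @arg_maxnP _ i xpredT (fun i => size (W i j)) isT.
rewrite -leqn0; apply: leq_trans (i1_max i isT) _; rewrite leqn0 size_poly_eq0.
apply: contraLR (small i1 j) => Wi1; rewrite -ltnNge monic_mxpoly_mulE.
have size_lead : size ('X^s * W i1 j) = (s + size (W i1 j))%N.
  by rewrite mulrC size_mulXn.
have size_tail :
    (size (\sum_l (\sum_(k < s) D k i1 l *: 'X^k) * W l j)%R < s + size (W i1 j))%N.
  apply: leq_ltn_trans (_ : _ <= (s + size (W i1 j)).-1)%N _; last first.
    by rewrite ltn_predL addn_gt0 size_poly_gt0 Wi1 orbT.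
  apply: leq_trans (size_sum _ _ _) _; apply/bigmax_leqP => l _.
  apply: leq_trans (size_mul_leq _ _) _.
  by have := size_sum_scaleXn (fun k => D k i1 l); have := i1_max l isT; lia.
rewrite size_polyDl size_lead ?size_polyN //.
by rewrite -[X in (X < _)%N]addn0 ltn_add2l size_poly_gt0.
Qed.

End MonicMatrixPolynomial.

Lemma monic_mxpoly_of_size_le (F : fieldType) n s (Y : 'M[{poly F}]_n) :
  (forall i j, (size (Y i j) <= s)%N) ->
  'X^s *: 1%:M - Y = monic_mxpoly (fun k : 'I_s => \matrix_(i, j) (Y i j)`_k).
Proof.
move=> small; congr (_ - _); apply/matrixP => i j; rewrite monic_mxpoly_tailE.
under eq_bigr do rewrite mxE; rewrite -poly_def.
apply/polyP => k; rewrite coef_poly; case: ltnP => // sk.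
by rewrite nth_default // (leq_trans (small i j)).
Qed.

Section SmithHermite.
Variables (F : closedFieldType) (n : nat) (A P Q : 'M[{poly F}]_n).
Variable phi : 'I_n -> {poly F}.
Hypotheses (char0 : [pchar F] =i pred0) (unitP : P \in unitmx) (unitQ : Q \in unitmx).
Hypothesis PAQ : P *m A *m Q = diag_mx (\row_i phi i).
Hypothesis monic_phi : forall i, phi i \is monic.

Lemma size_MG_index_det : size (MG_index phi) = (size (\det A)).-1.
Proof.
rewrite size_MG_index_prod //.
have -> : \prod_i phi i = \det A * \det P * \det Q.
  rewrite [_ * \det P]mulrC -!det_mulmx PAQ det_diag.
  by apply: eq_bigr => i _; rewrite mxE.
by rewrite !size_mul_size1 //; apply/eqP; rewrite -unitmx_poly.
Qed.

Lemma MG_range N m (B : 'M_(n, N)) (C : 'M[F]_(N, m)) (V : 'M_(n, m)) :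
  size (MG_index phi) = N ->
  stack_rows N (MGrows (P *m B) phi) *m C = stack_rows N (MGrows (P *m V) phi) ->
  exists W, B *m map_mx polyC C - V = A *m W.
Proof.
move=> sizeN BCV; apply: (smith_range unitP PAQ).
apply: (dvdp_MG_row_eq0 monic_phi char0) => t tI.
by rewrite mulmxBr MG_rowB mulmxA (MG_row_eq_of_stack sizeN BCV tI) subrr.
Qed.

Variable s : nat.
Local Notation B := (block_powers F n s).
Local Notation MB := (stack_rows (n * s) (MGrows (P *m B) phi)).

Lemma det_MG_neq0_of_monic_factor U (D : 'I_s -> 'M[F]_n) :
  U \in unitmx -> A *m U = monic_mxpoly D -> \det MB != 0.
Proof.
move=> unitU AU; have size_detA : size (\det A) = (n * s).+1.
  by rewrite -(size_det_mulmx_unitmx _ unitU) AU size_det_monic_mxpoly.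
apply: det_neq0_of_ker0 => c Mc0.
have [W BcW] : exists W, B *m map_mx polyC c - 0 = A *m W.
  apply: MG_range; first by rewrite size_MG_index_det size_detA.
  by rewrite Mc0 mulmx0 stack_rows_MGrows0.
have W0 : invmx U *m W = 0.
  apply: (monic_mxpoly_mul_eq0 (D := D)) => i j.
  by rewrite mulmxA -AU mulmxK // -BcW subr0 size_block_powers_mulmx.
apply: block_powers_mulmx_eq0.
by rewrite -[LHS]subr0 BcW -[W](mulKVmx unitU) W0 !mulmx0.
Qed.

Lemma monic_factor_of_det_MG :
  size (\det A) = (n * s).+1 -> \det MB != 0 ->
  exists2 U, U \in unitmx & exists D : 'I_s -> 'M[F]_n, A *m U = monic_mxpoly D.
Proof.
move=> size_detA detM; have unitM : MB \in unitmx by rewrite unitmxE unitfE.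
have sizeN : size (MG_index phi) = (n * s)%N by rewrite size_MG_index_det size_detA.
set C := invmx MB *m stack_rows (n * s) (MGrows (P *m 'X^s%:M) phi).
have [W BCW] := MG_range sizeN (mulKVmx unitM _ : MB *m C = _).
set D := fun k : 'I_s => \matrix_(i, j) ((B *m map_mx polyC C) i j)`_k.
have AW : A *m - W = monic_mxpoly D.
  rewrite mulmxN -BCW opprB -scalemx1.
  by apply: monic_mxpoly_of_size_le => i j; apply: size_block_powers_mulmx.
exists (- W); last by exists D.
apply: (@unitmx_of_size_det_mulmx _ _ A); first by rewrite -size_poly_gt0 size_detA.
by rewrite AW size_det_monic_mxpoly size_detA.
Qed.

End SmithHermite.

Theorem theorem5p12 (F : closedFieldType) (char0 : [pchar F] =i pred0)
  (n s : nat) (A P Q : 'M[{poly F}]_n) (phi : 'I_n -> {poly F})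
  (hA : \det A != 0) (hP : P \in unitmx) (hQ : Q \in unitmx)
  (hsmith : P *m A *m Q = diag_mx (\row_i phi i))
  (hmonic : forall i, phi i \is monic)
  (hdiv : forall i j : 'I_n, (i <= j)%N -> phi i %| phi j)
  (hs : (1 <= s)%N) :
  (exists U : 'M[{poly F}]_n, U \in unitmx /\
     exists D : 'I_s -> 'M[F]_n,
       A *m U = 'X^s *: 1%:M - \sum_(i < s) 'X^i *: map_mx polyC (D i))
  <->
  ((size (\det A)).-1 = (n * s)%N /\
   \det (mx_of_rows (MGrows (P *m block_powers F n s) phi)) != 0).
Proof.
rewrite mx_of_rowsE; split.
- case=> U [unitU [D AU]]; change (A *m U = monic_mxpoly D) in AU.
  have size_detA : size (\det A) = (n * s).+1.
    by rewrite -(size_det_mulmx_unitmx _ unitU) AU size_det_monic_mxpoly.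
  split; first by rewrite size_detA.
  exact: (det_MG_neq0_of_monic_factor char0 hP hQ hsmith hmonic unitU AU).
- case=> size_detA detM.
  have [|U unitU [D AU]] := monic_factor_of_det_MG char0 hP hQ hsmith hmonic _ detM.
    by rewrite -size_detA prednK // size_poly_gt0.
  by exists U; split; last exists D.
Qed.
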